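(* Let $X$ be a compact metric space and $\mathcal C,\mathcal D\subseteq\mathcal P(X)$. Let $P^\nu_{\mathcal C}$ and $P^\nu_{\mathcal D}$ be the optimal derivation sequences for $\mathcal C$ and $\mathcal D$, and let $Q^\nu$ be the optimal derivation sequence for $\{C\cap D: C\in\mathcal C, D\in\mathcal D\}$. Then for all ordinals $\nu,\mu$, $Q^{\nu\#\mu}\subseteq P^\nu_{\mathcal C}\cup P^\mu_{\mathcal D}$.
   Context: Optimal derivation sequence: for $\mathcal C\subseteq\mathcal P(X)$, define $P^0=X$, $P^{\nu+1}=P^\nu\setminus\bigcup\{U\subseteq X \text{ open}: P^\nu\cap U\subseteq C\text{ for some }C\in\mathcal C\}$, and $P^\lambda=\bigcap_{\nu<\lambda}P^\nu$ for limit $\lambda$. Natural (Hessenberg) sum: if $\alpha$ and $\beta$ have Cantor normal forms with exponents among $\xi_1>\dots>\xi_r$, $\alpha=\sum_i\omega^{\xi_i}m_i$, $\beta=\sum_i\omega^{\xi_i}n_i$ ($m_i,n_i\in\mathbb N$), then $\alpha\#\beta=\sum_i\omega^{\xi_i}(m_i+n_i)$. *)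

From Stdlib Require Import Reals List.
Open Scope R_scope.

Definition is_metric {X : Type} (d : X -> X -> R) : Prop :=
  (forall x y, 0 <= d x y) /\
  (forall x y, d x y = 0 <-> x = y) /\
  (forall x y, d x y = d y x) /\
  (forall x y z, d x z <= d x y + d y z).

Definition is_open {X : Type} (d : X -> X -> R) (U : X -> Prop) : Prop :=
  forall x, U x -> exists eps, 0 < eps /\ forall y, d x y < eps -> U y.

Definition is_compact {X : Type} (d : X -> X -> R) : Prop :=
  forall (I : Type) (U : I -> X -> Prop),
    (forall i, is_open d (U i)) ->
    (forall x, exists i, U i x) ->
    exists l : list I, forall x, exists i, In i l /\ U i x.

(* [osup A f] is the least ordinal strictly above every [f a]. *)
Inductive Ord : Type :=
  osup : forall (A : Type), (A -> Ord) -> Ord.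

Fixpoint ole (a b : Ord) {struct a} : Prop :=
  match a, b with
  | osup A f, osup B g => forall x, exists y, ole (f x) (g y)
  end.

Definition olt (a b : Ord) : Prop :=
  match b with osup B g => exists y, ole a (g y) end.

Definition oeq (a b : Ord) : Prop := ole a b /\ ole b a.

Definition ozero : Ord := osup Empty_set (fun e => match e with end).

Fixpoint oadd (a b : Ord) {struct b} : Ord :=
  match b with
  | osup B g =>
      match a with
      | osup A f =>
          osup (A + B) (fun s => match s with
                                 | inl x => f x
                                 | inr y => oadd a (g y)
                                 end)
      end
  end.

Fixpoint omul_nat (a : Ord) (n : nat) : Ord :=
  match n with
  | O => ozero
  | S n => oadd (omul_nat a n) a
  end.

Fixpoint oexpw (b : Ord) : Ord :=
  match b with
  | osup B g =>
      osup (option (B * nat))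
        (fun o => match o with
                  | None => ozero
                  | Some (y, n) => omul_nat (oexpw (g y)) n
                  end)
  end.

Fixpoint cnf_aux (acc : Ord) (l : list (Ord * nat)) : Ord :=
  match l with
  | nil => acc
  | (x, m) :: l' => cnf_aux (oadd acc (omul_nat (oexpw x) m)) l'
  end.

Definition cnf (l : list (Ord * nat)) : Ord := cnf_aux ozero l.

Fixpoint strictly_decreasing (l : list Ord) : Prop :=
  match l with
  | x :: ((y :: _) as t) => olt y x /\ strictly_decreasing t
  | _ => True
  end.

(* Natural (Hessenberg) sum, as defined in the paper: rho = alpha # beta iff
   for some exponents xi_1 > ... > xi_r and naturals m_i, n_i,
   alpha = sum w^{xi_i} m_i, beta = sum w^{xi_i} n_i, rho = sum w^{xi_i}(m_i+n_i). *)
Definition natural_sum (alpha beta rho : Ord) : Prop :=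
  exists l : list (Ord * nat * nat),
    strictly_decreasing (map (fun t => fst (fst t)) l) /\
    oeq alpha (cnf (map (fun t => (fst (fst t), snd (fst t))) l)) /\
    oeq beta  (cnf (map (fun t => (fst (fst t), snd t)) l)) /\
    oeq rho   (cnf (map (fun t => (fst (fst t), (snd (fst t) + snd t)%nat)) l)).

Definition deriv_step {X : Type} (d : X -> X -> R) (CC : (X -> Prop) -> Prop)
  (P : X -> Prop) : X -> Prop :=
  fun x => P x /\
    ~ (exists U, is_open d U /\ U x /\
         exists C, CC C /\ forall y, P y -> U y -> C y).

(* P^alpha = X ∩ ⋂_{beta < alpha} D(P^beta); this is the transfinite recursion
   P^0 = X, P^{nu+1} = D(P^nu), P^lambda = ⋂_{nu<lambda} P^nu. *)
Fixpoint opt_deriv {X : Type} (d : X -> X -> R) (CC : (X -> Prop) -> Prop)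
  (alpha : Ord) : X -> Prop :=
  match alpha with
  | osup A f => fun x => forall a : A, deriv_step d CC (opt_deriv d CC (f a)) x
  end.

Definition meet_family {X : Type} (CC DD : (X -> Prop) -> Prop) : (X -> Prop) -> Prop :=
  fun E => exists C D, CC C /\ DD D /\ forall x, E x <-> (C x /\ D x).

(* The natural sum is first replaced by its recursive characterisation
   [hsum nu mu], the least ordinal above all [hsum nu' mu] (nu' < nu) and
   [hsum nu mu'] (mu' < mu).
   - Topology: Q^(hsum nu mu) ⊆ P_C^nu ∪ P_D^mu by induction on nu and mu.  If
     x left P_C at stage nu' < nu through an open U and P_D at stage mu' < mu
     through V, the induction hypotheses show that the later of the stages
     hsum nu' mu, hsum nu mu' of Q is contained in C ∩ D on U ∩ V, so x left Q
     before hsum nu mu.  No metric or compactness assumption is used.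
   - Ordinals: hsum nu mu <= rho whenever rho is the natural sum of nu and mu
     given by Cantor normal forms.  The key descent step: any ordinal below the
     left summand is dominated by the left summand of another joint normal form
     whose right summand is not smaller and whose coefficient-wise sum is
     lexicographically (hence ordinally) smaller.
   The theorem follows since the derivation sequence is decreasing. *)

From Stdlib Require Import Reals List Classical Lia.

(** * The order on ordinal trees *)

Lemma ole_refl : forall a, ole a a.
Proof. induction a as [A f IH]; simpl; intros x; exists x; apply IH. Qed.

Lemma ole_trans : forall a b c, ole a b -> ole b c -> ole a c.
Proof.
  induction a as [A f IH]; intros [B g] [C h]; simpl; intros Hab Hbc x.
  destruct (Hab x) as [y Hy]. destruct (Hbc y) as [z Hz].
  exists z. eapply IH; eauto.
Qed.

(* Every child of a node lies below the node (stated with the node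
   abstracted, so that structural induction applies). *)
Lemma ole_child_gen : forall t, match t with osup C h => forall z, ole (h z) t end.
Proof.
  induction t as [C h IH]. intros z. pose proof (IH z) as Hz.
  remember (h z) as t eqn:E. destruct t as [D k]. simpl. intros w. exists z.
  rewrite <- E. apply Hz.
Qed.

Lemma ole_child : forall C h z, ole (h z) (osup C h).
Proof. intros C h z. exact (ole_child_gen (osup C h) z). Qed.

Lemma olt_child : forall C h z, olt (h z) (osup C h).
Proof. intros. simpl. exists z. apply ole_refl. Qed.

Lemma olt_ole : forall a b, olt a b -> ole a b.
Proof. intros a [B g] [y H]. eapply ole_trans; [exact H | apply ole_child]. Qed.

Lemma ole_olt_trans : forall a b c, ole a b -> olt b c -> olt a c.
Proof. intros a b [C h] H [z Hz]. exists z. eapply ole_trans; eauto. Qed.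

Lemma olt_ole_trans : forall a b c, olt a b -> ole b c -> olt a c.
Proof.
  intros a [B g] [C h] [y Hy] H. destruct (H y) as [z Hz].
  exists z. eapply ole_trans; eauto.
Qed.

Lemma olt_trans : forall a b c, olt a b -> olt b c -> olt a c.
Proof. intros. eapply ole_olt_trans; [apply olt_ole; eauto | eauto]. Qed.

Lemma osup_ole : forall A f b, (forall x, olt (f x) b) -> ole (osup A f) b.
Proof. intros A f [B g] H; simpl; exact H. Qed.

(* Classical trichotomy; both orientations are proved together because the
   induction on [a] needs the swapped statement for the children of [a]. *)
Lemma ole_or_gt_both : forall a b, (ole a b \/ olt b a) /\ (ole b a \/ olt a b).
Proof.
  induction a as [A f IHa]. intro b. induction b as [B g IHb]. split.
  - destruct (classic (forall x, olt (f x) (osup B g))) as [H|H].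
    + left. apply osup_ole; exact H.
    + right. apply not_all_ex_not in H as [x Hx]. exists x.
      destruct (proj2 (IHa x (osup B g))); tauto.
  - destruct (classic (forall y, olt (g y) (osup A f))) as [H|H].
    + left. apply osup_ole; exact H.
    + right. apply not_all_ex_not in H as [y Hy]. exists y.
      destruct (proj1 (IHb y)); tauto.
Qed.

Lemma ole_or_gt : forall a b, ole a b \/ olt b a.
Proof. intros a b. exact (proj1 (ole_or_gt_both a b)). Qed.

Lemma ole_total : forall a b, ole a b \/ ole b a.
Proof. intros a b. destruct (ole_or_gt a b); auto using olt_ole. Qed.

(** * Ordinal arithmetic *)

Lemma oadd_mono_r : forall b b' a, ole b b' -> ole (oadd a b) (oadd a b').
Proof.
  induction b as [B g IH]; intros [B' g'] [A f] H. simpl. intros [x|y].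
  - exists (inl x). apply ole_refl.
  - destruct (H y) as [y' Hy]. exists (inr y'). apply IH; auto.
Qed.

Lemma oadd_lt_r : forall a b b', olt b b' -> olt (oadd a b) (oadd a b').
Proof.
  intros [A f] b [B' g'] [y' Hy]. simpl. exists (inr y'). apply oadd_mono_r; auto.
Qed.

Lemma oadd_mono_l : forall b a a', ole a a' -> ole (oadd a b) (oadd a' b).
Proof.
  induction b as [B g IH]; intros [A f] [A' f'] H. simpl. intros [x|y].
  - destruct (H x) as [x' Hx]. exists (inl x'). exact Hx.
  - exists (inr y). apply IH; auto.
Qed.

Lemma oadd_infl : forall a b, ole a (oadd a b).
Proof. intros [A f] [B g]; simpl; intros x; exists (inl x); apply ole_refl. Qed.

Lemma oadd_zero : forall a, ole (oadd a ozero) a.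
Proof. intros [A f]; unfold ozero; simpl; intros [x|[]]; exists x; apply ole_refl. Qed.

Lemma oadd_assoc : forall c a b,
  ole (oadd (oadd a b) c) (oadd a (oadd b c)) /\
  ole (oadd a (oadd b c)) (oadd (oadd a b) c).
Proof.
  induction c as [C h IH]; intros [A f] [B g]. split.
  - simpl. intros [[x|y]|z].
    + exists (inl x). apply ole_refl.
    + exists (inr (inl y)). apply ole_refl.
    + exists (inr (inr z)). exact (proj1 (IH z (osup A f) (osup B g))).
  - simpl. intros [x|[y|z]].
    + exists (inl (inl x)). apply ole_refl.
    + exists (inl (inr y)). apply ole_refl.
    + exists (inr z). exact (proj2 (IH z (osup A f) (osup B g))).
Qed.

Lemma omul_mono_n : forall a n n', (n <= n')%nat -> ole (omul_nat a n) (omul_nat a n').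
Proof.
  intros a n n' H. induction H; [apply ole_refl|].
  eapply ole_trans; [exact IHle | simpl; apply oadd_infl].
Qed.

Lemma omul_mono_a : forall n a a', ole a a' -> ole (omul_nat a n) (omul_nat a' n).
Proof.
  induction n; intros a a' H; simpl; [intros []|].
  eapply ole_trans; [apply oadd_mono_l, IHn, H | apply oadd_mono_r, H].
Qed.

Lemma omul_add : forall a m n,
  ole (oadd (omul_nat a n) (omul_nat a m)) (omul_nat a (n + m)).
Proof.
  intros a m; induction m; intros n.
  - rewrite Nat.add_0_r. apply oadd_zero.
  - rewrite Nat.add_succ_r. simpl.
    eapply ole_trans; [apply (proj2 (oadd_assoc _ _ _)) |].
    apply oadd_mono_l, IHm.
Qed.

Lemma oexpw_mono : forall x y, ole x y -> ole (oexpw x) (oexpw y).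
Proof.
  induction x as [B g IH]; intros [B' g'] H; simpl. intros [[i n]|].
  - destruct (H i) as [j Hj]. exists (Some (j, n)). apply omul_mono_a, IH; auto.
  - exists None. intros [].
Qed.

Lemma oexpw_lt : forall zeta xi k, olt zeta xi -> olt (omul_nat (oexpw zeta) k) (oexpw xi).
Proof.
  intros zeta [B g] k [y Hy]. simpl. exists (Some (y, k)).
  apply omul_mono_a, oexpw_mono, Hy.
Qed.

Lemma oexpw_pos : forall x, olt ozero (oexpw x).
Proof. intros [B g]. simpl. exists None. intros []. Qed.

Lemma olt_oadd_oexpw_cases : forall c a xi, olt c (oadd a (oexpw xi)) ->
  ole c a \/ exists eta k, olt eta xi /\ ole c (oadd a (omul_nat (oexpw eta) k)).
Proof.
  intros c [A f] [B g] [[x|[[y k]|]] H].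
  - left. eapply ole_trans; [exact H | apply ole_child].
  - right. exists (g y), k. split; [apply olt_child | exact H].
  - left. eapply ole_trans; [exact H | apply oadd_zero].
Qed.

Lemma oexpw_absorb : forall xi b c eta m, olt c (oadd b (oexpw xi)) -> olt eta xi ->
  olt (oadd c (omul_nat (oexpw eta) m)) (oadd b (oexpw xi)).
Proof.
  intros xi b c eta m Hc He.
  destruct (olt_oadd_oexpw_cases c b xi Hc) as [Hcb | [zeta [k [Hz Hck]]]].
  - eapply ole_olt_trans; [apply oadd_mono_l, Hcb |]. apply oadd_lt_r, oexpw_lt, He.
  - assert (Hmax : exists z, ole zeta z /\ ole eta z /\ olt z xi).
    { destruct (ole_total zeta eta) as [T|T].
      - exists eta. repeat split; auto. apply ole_refl.
      - exists zeta. repeat split; auto. apply ole_refl. }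
    destruct Hmax as [z [Hzz [Hez Hzxi]]].
    eapply ole_olt_trans; [apply oadd_mono_l, Hck |].
    eapply ole_olt_trans.
    { eapply ole_trans; [apply oadd_mono_l, oadd_mono_r, omul_mono_a, oexpw_mono, Hzz |].
      apply oadd_mono_r, omul_mono_a, oexpw_mono, Hez. }
    eapply ole_olt_trans; [apply (proj1 (oadd_assoc _ _ _)) |].
    eapply ole_olt_trans; [apply oadd_mono_r, omul_add |].
    apply oadd_lt_r, oexpw_lt, Hzxi.
Qed.

(** * Cantor normal forms *)

Lemma cnf_infl : forall M acc, ole acc (cnf_aux acc M).
Proof.
  induction M as [|[x m] M IH]; simpl; intros acc; [apply ole_refl|].
  eapply ole_trans; [apply oadd_infl | apply IH].
Qed.

Lemma cnf_mono_acc : forall M acc acc', ole acc acc' -> ole (cnf_aux acc M) (cnf_aux acc' M).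
Proof.
  induction M as [|[x m] M IH]; simpl; intros acc acc' H; auto.
  apply IH, oadd_mono_l, H.
Qed.

Lemma cnf_app : forall l1 l2 acc, cnf_aux acc (l1 ++ l2) = cnf_aux (cnf_aux acc l1) l2.
Proof. induction l1 as [|[x m] l1 IH]; simpl; auto. Qed.

Lemma cnf_tail_lt : forall M xi b c, (forall t, In t M -> olt (fst t) xi) ->
  olt c (oadd b (oexpw xi)) -> olt (cnf_aux c M) (oadd b (oexpw xi)).
Proof.
  induction M as [|[eta m] M IH]; simpl; intros xi b c HM Hc; auto.
  apply IH; auto. apply oexpw_absorb; auto. apply (HM (eta, m)); auto.
Qed.

Lemma cnf_lex : forall s xi c c' T T', (c < c')%nat ->
  (forall t, In t T -> olt (fst t) xi) ->
  olt (cnf_aux (oadd s (omul_nat (oexpw xi) c)) T)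
      (cnf_aux (oadd s (omul_nat (oexpw xi) c')) T').
Proof.
  intros s xi c c' T T' Hc HT.
  set (u := oadd s (omul_nat (oexpw xi) c)).
  eapply olt_ole_trans.
  - apply cnf_tail_lt; [exact HT |].
    eapply ole_olt_trans; [apply (oadd_infl u ozero) |]. apply oadd_lt_r, oexpw_pos.
  - eapply ole_trans; [apply (proj1 (oadd_assoc _ _ _)) |].
    eapply ole_trans; [| apply cnf_infl].
    apply oadd_mono_r.
    change (ole (omul_nat (oexpw xi) (S c)) (omul_nat (oexpw xi) c')).
    apply omul_mono_n. lia.
Qed.

Lemma decreasing_head_gt : forall l xi, strictly_decreasing (xi :: l) ->
  forall y, In y l -> olt y xi.
Proof.
  induction l as [|z l IH]; simpl; intros xi H y Hy; [contradiction|].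
  destruct H as [Hzxi Hl]. destruct Hy as [<- | Hy]; auto.
  eapply olt_trans; [eapply IH; eauto | exact Hzxi].
Qed.

Lemma decreasing_suffix : forall P l, strictly_decreasing (P ++ l) -> strictly_decreasing l.
Proof.
  induction P as [|x P IH]; auto. intros l H. apply IH.
  simpl in H. destruct (P ++ l) as [|y m]; [exact I | exact (proj2 H)].
Qed.

Lemma decreasing_replace_tail : forall P x l l', strictly_decreasing (P ++ x :: l) ->
  strictly_decreasing (x :: l') -> strictly_decreasing (P ++ x :: l').
Proof.
  induction P as [|y P IH]; simpl; auto. intros x l l' H1 H2.
  destruct P as [|z P]; simpl in *.
  - destruct H1; split; auto.
  - destruct H1 as [Hzy Hrest]. split; [exact Hzy | eapply IH; eauto].
Qed.

(** * Joint normal forms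

   A natural-sum witness is a list of triples [(xi, m, n)]; it encodes the
   left summand [sum w^xi m], the right summand [sum w^xi n] and their
   natural sum [sum w^xi (m + n)]. *)

Definition exps (L : list (Ord * nat * nat)) : list Ord := map (fun t => fst (fst t)) L.
Definition left_terms (L : list (Ord * nat * nat)) : list (Ord * nat) :=
  map (fun t => (fst (fst t), snd (fst t))) L.
Definition right_terms (L : list (Ord * nat * nat)) : list (Ord * nat) :=
  map (fun t => (fst (fst t), snd t)) L.
Definition sum_terms (L : list (Ord * nat * nat)) : list (Ord * nat) :=
  map (fun t => (fst (fst t), (snd (fst t) + snd t)%nat)) L.

Definition clear_left (L : list (Ord * nat * nat)) : list (Ord * nat * nat) :=
  map (fun t => (fst (fst t), 0%nat, snd t)) L.
Definition swap_sides (L : list (Ord * nat * nat)) : list (Ord * nat * nat) :=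
  map (fun t => (fst (fst t), snd t, snd (fst t))) L.

Lemma exps_clear_left : forall L, exps (clear_left L) = exps L.
Proof. induction L; simpl; f_equal; auto. Qed.
Lemma right_terms_clear_left : forall L, right_terms (clear_left L) = right_terms L.
Proof. induction L; simpl; f_equal; auto. Qed.
Lemma exps_swap : forall L, exps (swap_sides L) = exps L.
Proof. induction L; simpl; f_equal; auto. Qed.
Lemma left_terms_swap : forall L, left_terms (swap_sides L) = right_terms L.
Proof. induction L; simpl; f_equal; auto. Qed.
Lemma right_terms_swap : forall L, right_terms (swap_sides L) = left_terms L.
Proof. induction L; simpl; f_equal; auto. Qed.
Lemma sum_terms_swap : forall L, sum_terms (swap_sides L) = sum_terms L.
Proof. induction L; simpl; f_equal; auto. f_equal. lia. Qed.

Lemma locate_below_left : forall L acc b, olt b (cnf_aux acc (left_terms L)) ->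
  olt b acc \/
  exists P xi m n T, L = P ++ (xi, S m, n) :: T /\
    olt b (oadd (cnf_aux acc (left_terms P)) (omul_nat (oexpw xi) (S m))).
Proof.
  induction L as [|t T IH]; unfold left_terms in *; simpl; intros acc b H; [left; auto|].
  destruct t as [[xi c] n]. simpl in H.
  destruct (IH _ _ H) as [H1 | [P [xi' [m [n' [T' [EL H2]]]]]]].
  - destruct c as [|m].
    + left. eapply olt_ole_trans; [exact H1 | apply oadd_zero].
    + right. exists nil, xi, m, n, T. split; [reflexivity | exact H1].
  - right. exists ((xi, c, n) :: P), xi', m, n', T'.
    split; [rewrite EL; reflexivity | exact H2].
Qed.

Lemma insert_left_term : forall T xi eta p,
  strictly_decreasing (xi :: exps T) -> olt eta xi ->
  exists T', strictly_decreasing (xi :: exps T') /\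
    (forall acc, ole (oadd acc (omul_nat (oexpw eta) p)) (cnf_aux acc (left_terms T'))) /\
    (forall acc, ole (cnf_aux acc (right_terms T)) (cnf_aux acc (right_terms T'))).
Proof.
  intros [|[[zeta c] n'] T2] xi eta p HT He.
  - exists ((eta, p, 0%nat) :: nil). simpl. split; [split; auto | split].
    + intros; apply ole_refl.
    + intros acc; exact (oadd_infl acc ozero).
  - destruct (ole_or_gt eta zeta) as [H|H].
    + exists ((zeta, p, n') :: clear_left T2). split; [|split].
      * simpl. rewrite exps_clear_left. exact HT.
      * intros acc. simpl. eapply ole_trans; [| apply cnf_infl].
        apply oadd_mono_r, omul_mono_a, oexpw_mono, H.
      * intros acc. simpl. rewrite right_terms_clear_left. apply ole_refl.
    + exists ((eta, p, 0%nat) :: clear_left ((zeta, c, n') :: T2)). split; [|split].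
      * change (strictly_decreasing (xi :: eta :: exps (clear_left ((zeta, c, n') :: T2)))).
        rewrite exps_clear_left. simpl in *. tauto.
      * intros acc.
        exact (cnf_infl (left_terms (clear_left ((zeta, c, n') :: T2)))
                        (oadd acc (omul_nat (oexpw eta) p))).
      * intros acc.
        change (ole (cnf_aux acc (right_terms ((zeta, c, n') :: T2)))
          (cnf_aux (oadd acc (omul_nat (oexpw eta) 0))
                   (right_terms (clear_left ((zeta, c, n') :: T2))))).
        rewrite right_terms_clear_left. apply cnf_mono_acc, oadd_infl.
Qed.

Lemma reshape_tail : forall T xi acc b,
  strictly_decreasing (xi :: exps T) -> olt b (oadd acc (oexpw xi)) ->
  exists T', strictly_decreasing (xi :: exps T') /\
    ole b (cnf_aux acc (left_terms T')) /\
    (forall acc', ole (cnf_aux acc' (right_terms T)) (cnf_aux acc' (right_terms T'))).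
Proof.
  intros T xi acc b HT Hb.
  destruct (olt_oadd_oexpw_cases _ _ _ Hb) as [Hle | [eta [k [He Hk]]]].
  - exists (clear_left T). rewrite exps_clear_left, right_terms_clear_left.
    split; [exact HT | split].
    + eapply ole_trans; [exact Hle | apply cnf_infl].
    + intros; apply ole_refl.
  - destruct (insert_left_term T xi eta k HT He) as [T' [HT' [Hleft Hright]]].
    exists T'. split; [exact HT' | split; [| exact Hright]].
    eapply ole_trans; [exact Hk | apply Hleft].
Qed.

Lemma descend_left : forall L b, strictly_decreasing (exps L) ->
  olt b (cnf (left_terms L)) ->
  exists L', strictly_decreasing (exps L') /\ ole b (cnf (left_terms L')) /\
    ole (cnf (right_terms L)) (cnf (right_terms L')) /\
    olt (cnf (sum_terms L')) (cnf (sum_terms L)).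
Proof.
  intros L b HL Hb. unfold cnf in Hb.
  destruct (locate_below_left L ozero b Hb) as [Hzero | [P [xi [m [n [T [EL Hb']]]]]]].
  { exfalso. destruct Hzero as [[] _]. }
  subst L. set (S0 := cnf_aux ozero (left_terms P)) in *.
  assert (Hb'' : olt b (oadd (oadd S0 (omul_nat (oexpw xi) m)) (oexpw xi))).
  { eapply olt_ole_trans; [exact Hb' | apply (proj2 (oadd_assoc _ _ _))]. }
  assert (HT : strictly_decreasing (xi :: exps T)).
  { unfold exps in HL. rewrite map_app in HL. exact (decreasing_suffix _ _ HL). }
  destruct (reshape_tail T xi _ b HT Hb'') as [T' [HT' [Hleft Hright]]].
  exists (P ++ (xi, m, n) :: T'). unfold cnf, exps, left_terms, right_terms, sum_terms in *.
  rewrite !map_app, !cnf_app. cbn [map cnf_aux fst snd].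
  split; [| split; [| split]].
  - rewrite map_app in HL.
    exact (decreasing_replace_tail _ _ (map (fun t => fst (fst t)) T) _ HL HT').
  - exact Hleft.
  - apply Hright.
  - apply (cnf_lex _ xi (m + n) (S m + n)); [lia |].
    intros t Ht. apply in_map_iff in Ht as [u [<- Hu]]. simpl.
    apply (decreasing_head_gt _ _ HT').
    apply in_map with (f := fun t => fst (fst t)). exact Hu.
Qed.

Lemma descend_right : forall L b, strictly_decreasing (exps L) ->
  olt b (cnf (right_terms L)) ->
  exists L', strictly_decreasing (exps L') /\
    ole (cnf (left_terms L)) (cnf (left_terms L')) /\ ole b (cnf (right_terms L')) /\
    olt (cnf (sum_terms L')) (cnf (sum_terms L)).
Proof.
  intros L b HL Hb. rewrite <- exps_swap in HL. rewrite <- left_terms_swap in Hb.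
  destruct (descend_left _ _ HL Hb) as [L' [H1 [H2 [H3 H4]]]].
  exists (swap_sides L').
  rewrite exps_swap, left_terms_swap, right_terms_swap, sum_terms_swap.
  rewrite right_terms_swap, !sum_terms_swap in *. auto.
Qed.

(** * The recursive natural sum

   [hsum a b] is the least ordinal strictly above every [hsum a' b] with
   [a' < a] and every [hsum a b'] with [b' < b]. *)

Fixpoint hsum (a : Ord) : Ord -> Ord :=
  match a with
  | osup A f => fix hsum_a (b : Ord) : Ord :=
      match b with
      | osup B g => osup (A + B) (fun s => match s with
                                        | inl x => hsum (f x) b
                                        | inr y => hsum_a (g y) end)
      end
  end.

Lemma hsum_unfold : forall A f B g, hsum (osup A f) (osup B g) =
  osup (A + B) (fun s => match s with
                         | inl x => hsum (f x) (osup B g)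
                         | inr y => hsum (osup A f) (g y) end).
Proof. reflexivity. Qed.

Lemma hsum_le_cnf_sum : forall nu mu L, strictly_decreasing (exps L) ->
  ole nu (cnf (left_terms L)) -> ole mu (cnf (right_terms L)) ->
  ole (hsum nu mu) (cnf (sum_terms L)).
Proof.
  induction nu as [A f IHf]. intros mu. induction mu as [B g IHg]. intros L HL Hnu Hmu.
  rewrite hsum_unfold. apply osup_ole. intros [x|y].
  - assert (Hx : olt (f x) (cnf (left_terms L))).
    { eapply olt_ole_trans; [apply olt_child | exact Hnu]. }
    destruct (descend_left L _ HL Hx) as [L' [H1 [H2 [H3 H4]]]].
    eapply ole_olt_trans; [| exact H4]. apply IHf; auto. eapply ole_trans; eauto.
  - assert (Hy : olt (g y) (cnf (right_terms L))).
    { eapply olt_ole_trans; [apply olt_child | exact Hmu]. }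
    destruct (descend_right L _ HL Hy) as [L' [H1 [H2 [H3 H4]]]].
    eapply ole_olt_trans; [| exact H4]. apply IHg; auto. eapply ole_trans; eauto.
Qed.

Lemma hsum_le_natural_sum : forall nu mu rho, natural_sum nu mu rho -> ole (hsum nu mu) rho.
Proof.
  intros nu mu rho [L [HL [Hnu [Hmu Hrho]]]].
  eapply ole_trans; [| exact (proj2 Hrho)].
  apply hsum_le_cnf_sum; [exact HL | exact (proj1 Hnu) | exact (proj1 Hmu)].
Qed.

(** * Optimal derivation sequences *)

Section OptimalDerivation.

Variables (X : Type) (d : X -> X -> R).

Lemma is_open_inter : forall U V, is_open d U -> is_open d V ->
  is_open d (fun y => U y /\ V y).
Proof.
  intros U V HU HV x [Ux Vx].
  destruct (HU x Ux) as [e1 [e1p H1]]. destruct (HV x Vx) as [e2 [e2p H2]].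
  exists (Rmin e1 e2). split; [apply Rmin_pos; auto |].
  intros y Hy. split.
  - apply H1. eapply Rlt_le_trans; [exact Hy | apply Rmin_l].
  - apply H2. eapply Rlt_le_trans; [exact Hy | apply Rmin_r].
Qed.

Lemma meet_family_inter : forall (CC DD : (X -> Prop) -> Prop) C D, CC C -> DD D ->
  meet_family CC DD (fun y => C y /\ D y).
Proof. intros CC DD C D HC HD. exists C, D. split; [exact HC | split; [exact HD | intro; tauto]]. Qed.

Lemma deriv_step_mono : forall CC (P P' : X -> Prop), (forall y, P y -> P' y) ->
  forall x, deriv_step d CC P x -> deriv_step d CC P' x.
Proof.
  intros CC P P' H x [Px Hn]. split; auto.
  intros [U [HU [Ux [C [HC HUC]]]]]. apply Hn. exists U. repeat split; auto.
  exists C. auto.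
Qed.

Lemma deriv_step_removed : forall CC (P U C : X -> Prop) x, is_open d U -> U x -> CC C ->
  (forall y, P y -> U y -> C y) -> ~ deriv_step d CC P x.
Proof. intros CC P U C x HU Ux HC HUC [_ Hn]. apply Hn. exists U. eauto. Qed.

Lemma removal_witness : forall CC (P : X -> Prop) x, P x -> ~ deriv_step d CC P x ->
  exists U, is_open d U /\ U x /\ exists C, CC C /\ forall y, P y -> U y -> C y.
Proof. intros CC P x Px Hn. apply NNPP. intro H. apply Hn. split; auto. Qed.

Lemma opt_deriv_antitone : forall CC a b, ole a b ->
  forall x, opt_deriv d CC b x -> opt_deriv d CC a x.
Proof.
  intros CC. induction a as [A f IH]; intros [B g] H x Hx; simpl in *. intros a'.
  destruct (H a') as [y Hy]. apply deriv_step_mono with (opt_deriv d CC (g y)); auto.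
  intros z; apply IH; auto.
Qed.

Lemma opt_deriv_lt_step : forall CC a b x, olt a b ->
  opt_deriv d CC b x -> deriv_step d CC (opt_deriv d CC a) x.
Proof.
  intros CC a [B g] x [y Hy] Hx. simpl in Hx.
  apply deriv_step_mono with (opt_deriv d CC (g y)); auto.
  intros z; apply opt_deriv_antitone; auto.
Qed.

Lemma opt_deriv_misses_witness : forall CC a b (U C : X -> Prop) y, olt a b ->
  is_open d U -> CC C -> (forall z, opt_deriv d CC a z -> U z -> C z) ->
  opt_deriv d CC b y -> ~ U y.
Proof.
  intros CC a b U C y Hab HU HC HUC Hy Uy.
  exact (deriv_step_removed CC _ U C y HU Uy HC HUC (opt_deriv_lt_step CC a b y Hab Hy)).
Qed.

(* The theorem for the recursive natural sum, by induction on [nu] and [mu]: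
   if [x] left [P_C] at stage [f a] via [U] and [P_D] at stage [g b] via [V],
   then by induction the larger of the two predecessor stages of [Q] lies,
   inside [U ∩ V], in [C ∩ D], so [x] already left [Q] there. *)
Lemma opt_deriv_hsum_split : forall CC DD nu mu x,
  opt_deriv d (meet_family CC DD) (hsum nu mu) x ->
  opt_deriv d CC nu x \/ opt_deriv d DD mu x.
Proof.
  intros CC DD. set (Q := opt_deriv d (meet_family CC DD)).
  induction nu as [A f IHf]; intros mu; induction mu as [B g IHg]; intros x Hx.
  rewrite hsum_unfold in Hx. simpl in Hx.
  apply NNPP. intros Hn. apply not_or_and in Hn as [HnC HnD].
  assert (HnC' := HnC). assert (HnD' := HnD). simpl in HnC', HnD'.
  apply not_all_ex_not in HnC' as [a Ha]. apply not_all_ex_not in HnD' as [b Hb].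
  assert (Pa : opt_deriv d CC (f a) x).
  { destruct (IHf a (osup B g) x (proj1 (Hx (inl a)))); tauto. }
  assert (Pb : opt_deriv d DD (g b) x).
  { destruct (IHg b x (proj1 (Hx (inr b)))); tauto. }
  destruct (removal_witness CC _ x Pa Ha) as [U [HU [Ux [C [HC HUC]]]]].
  destruct (removal_witness DD _ x Pb Hb) as [V [HV [Vx [D [HD HVD]]]]].
  set (al := hsum (f a) (osup B g)). set (be := hsum (osup A f) (g b)).
  assert (Hinside : forall y, Q al y -> Q be y -> U y -> V y -> C y /\ D y).
  { intros y Qa Qb Uy Vy. split.
    - destruct (IHf a (osup B g) y Qa) as [Y|Y]; [now apply HUC |].
      exfalso. exact (opt_deriv_misses_witness DD _ _ V D y (olt_child _ g b) HV HD HVD Y Vy).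
    - destruct (IHg b y Qb) as [Y|Y]; [| now apply HVD].
      exfalso. exact (opt_deriv_misses_witness CC _ _ U C y (olt_child _ f a) HU HC HUC Y Uy). }
  assert (Hremoved : forall r, ole al r -> ole be r -> ~ deriv_step d (meet_family CC DD) (Q r) x).
  { intros r Hal Hbe.
    apply (deriv_step_removed _ _ (fun y => U y /\ V y) (fun y => C y /\ D y));
      [apply is_open_inter; auto | auto | apply meet_family_inter; auto |].
    intros y Qy [Uy Vy].
    apply Hinside; auto; eapply opt_deriv_antitone; eauto. }
  destruct (ole_total al be) as [T|T].
  - exact (Hremoved be T (ole_refl _) (Hx (inr b))).
  - exact (Hremoved al (ole_refl _) T (Hx (inl a))).
Qed.

End OptimalDerivation.

Theorem mainTheorem16 (X : Type) (d : X -> X -> R)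
  (Hmetric : is_metric d) (Hcompact : is_compact d)
  (CC DD : (X -> Prop) -> Prop)
  (nu mu rho : Ord) (Hsum : natural_sum nu mu rho) :
  forall x : X,
    opt_deriv d (meet_family CC DD) rho x ->
    opt_deriv d CC nu x \/ opt_deriv d DD mu x.
Proof.
  intros x Hx. apply opt_deriv_hsum_split.
  apply opt_deriv_antitone with rho; [| exact Hx].
  exact (hsum_le_natural_sum nu mu rho Hsum).
Qed.
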